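(* Let $q=2^h$, $m\ge1$, and on $V=\mathbb{F}_q^{2m}$ let $\langle u,v\rangle=uFv^T$ with $F=\begin{pmatrix}0&I_m\\ I_m&0\end{pmatrix}$, $\vartheta_0(u)=uEu^T$ with $E=\begin{pmatrix}0&I_m\\0&0\end{pmatrix}$, and $\vartheta_a(u)=\vartheta_0(u)+\langle a,u\rangle^2$ for $a\in V$. For $c\in V$ let $T_c:V\to V$, $u\mapsto u+\langle u,c\rangle c$ be the symplectic transvection, and for a quadratic form $\Theta$ and invertible linear $A$ put $\Theta^A(u)=\Theta(uA^{-1})$. Let $a,b\in V$, $a\neq b$. The following are equivalent: (i) there exists $c\in V$ with $\vartheta_a^{T_c}=\vartheta_b$; (ii) there exists $\gamma\in\mathbb{F}_q^*$ with $\vartheta_a^{T_{\gamma(a+b)}}=\vartheta_b$; (iii) $\mathrm{Tr}_{\mathbb{F}_q/\mathbb{F}_2}(\vartheta_0(a))=\mathrm{Tr}_{\mathbb{F}_q/\mathbb{F}_2}(\vartheta_0(b))$; (iv) the polynomial $t^2+t+\vartheta_0(a)+\vartheta_0(b)$ is reducible over $\mathbb{F}_q$. *)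

From HB Require Import structures.
From mathcomp Require Import all_boot all_order all_algebra all_field.
Set Implicit Arguments. Unset Strict Implicit. Unset Printing Implicit Defensive.
Import GRing.Theory.
Local Open Scope ring_scope.

Section Forms.
Variables (K : fieldType) (m : nat).

Definition Fmx : 'M[K]_(m + m) := block_mx 0 1%:M 1%:M 0.
Definition Emx : 'M[K]_(m + m) := block_mx 0 1%:M 0 0.

Definition bform (u v : 'rV[K]_(m + m)) : K := (u *m Fmx *m v^T) 0 0.
Definition theta0 (u : 'rV[K]_(m + m)) : K := (u *m Emx *m u^T) 0 0.
Definition theta (a u : 'rV[K]_(m + m)) : K := theta0 u + (bform a u) ^+ 2.

(* matrix of the transvection T_c : u |-> u + <u,c> c  (acting on row vectors) *)
Definition transv (c : 'rV[K]_(m + m)) : 'M[K]_(m + m) :=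
  1%:M + Fmx *m c^T *m c.

Definition qf_act (Th : 'rV[K]_(m + m) -> K) (A : 'M[K]_(m + m))
  : 'rV[K]_(m + m) -> K := fun u => Th (u *m invmx A).
End Forms.

Definition trace2 (K : fieldType) (h : nat) (x : K) : K :=
  \sum_(i < h) x ^+ (2 ^ i).

(* In characteristic 2 the transvection T_c is an involution, and
   theta_a^{T_c}(u) = theta_a(u) + <c,u>^2 (1 + theta_a(c)); so theta_a^{T_c} = theta_b
   means <a+b,u>^2 = <c,u>^2 (1 + theta_a(c)) for all u.  Squaring is bijective on F_q,
   so by nondegeneracy c must be a nonzero multiple of a+b, and for c = g(a+b) the
   condition reduces to g^2 (1 + g^2 theta_a(a+b)) = 1, i.e. theta_a(a+b) = t^2 + t with
   t = g^-2.  As theta_a(a+b) = theta_0(a) + theta_0(b) + s^2 + s with s = <a,b>, every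
   condition says that theta_0(a) + theta_0(b) lies in the image of the additive map
   z |-> z^2 + z.  That image is the kernel of the absolute trace: it has q/2 elements,
   is killed by the trace, and the trace kernel consists of roots of a polynomial of
   degree q/2. *)
From HB Require Import structures.
From mathcomp Require Import all_boot all_order all_algebra all_field.
From mathcomp Require Import ring.
Set Implicit Arguments. Unset Strict Implicit. Unset Printing Implicit Defensive.
Import GRing.Theory.
Local Open Scope ring_scope.

Section Char2Field.
Variables (K : fieldType) (K2 : 2%N \in [pchar K]).

Definition artin_schreier (z : K) : K := z ^+ 2 + z.

Lemma sqrrD_pchar2 (x y : K) : (x + y) ^+ 2 = x ^+ 2 + y ^+ 2.
Proof. by rewrite sqrrD mulrn_pchar // addr0. Qed.

Lemma sqrf_inj : injective (fun x : K => x ^+ 2).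
Proof. exact: (fmorph_inj (pFrobenius_aut K2)). Qed.

Lemma eq_pchar2 (x y : K) : (x == y) = (x + y == 0).
Proof. by rewrite -subr_eq0 oppr_pchar2. Qed.

Lemma artin_schreierE (z : K) : artin_schreier z = z ^+ 2 - z.
Proof. by rewrite oppr_pchar2. Qed.

Lemma artin_schreierD (x y : K) :
  artin_schreier (x + y) = artin_schreier x + artin_schreier y.
Proof. by rewrite /artin_schreier sqrrD_pchar2 addrACA. Qed.

Lemma artin_schreier_eq (x y : K) :
  (artin_schreier x == artin_schreier y) = (x == y) || (x == y + 1).
Proof.
rewrite eq_pchar2 -artin_schreierD [x == y]eq_pchar2 [x == y + 1]eq_pchar2 addrA.
by rewrite /artin_schreier -{2}[x + y]mulr1 -mulrDr mulf_eq0.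
Qed.

Lemma artin_schreier_shift (k w : K) :
  (exists t, artin_schreier t = k + artin_schreier w) <->
  (exists z, artin_schreier z = k).
Proof.
split=> [[t Ht] | [z <-]]; last by exists (z + w); rewrite artin_schreierD.
by exists (t + w); rewrite artin_schreierD // Ht -addrA addrr_pchar2 // addr0.
Qed.

Lemma size_artin_schreier_poly (e : K) : size ('X^2 + 'X + e%:P) = 3%N.
Proof.
rewrite -addrA size_polyDl size_polyXn //.
rewrite (leq_ltn_trans (size_polyD _ _)) // size_polyX size_polyC gtn_max.
by case: (e != 0).
Qed.

Lemma root_artin_schreier_polyP (e z : K) :
  reflect (artin_schreier z = e) (root ('X^2 + 'X + e%:P) z).
Proof. by rewrite /root !hornerE addr_eq0 oppr_pchar2 //; apply: eqP. Qed.

End Char2Field.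

Lemma cubic_reducibleP (F : finFieldType) (p : {poly F}) :
  (2 < size p <= 4)%N -> ~ irreducible_poly p <-> exists x, root p x.
Proof.
case/andP=> p_gt2 p_le4; split=> [p_red | [x px] p_irr].
  have [/existsP[x px] | no_root] := boolP [exists x, root p x]; first by exists x.
  case: p_red; apply: cubic_irreducible; first by rewrite p_le4 ltnW.
  by move=> x; apply: contra no_root => px; apply/existsP; exists x.
have [] := irredp_XsubCP p_irr (_ : 'X - x%:P %| p); first by rewrite dvdp_XsubCl.
  by rewrite -size_poly_eq1 size_XsubC.
by move/eqp_size; rewrite size_XsubC => sz_p; rewrite -sz_p in p_gt2.
Qed.

Section FiniteChar2Field.
Variables (F : finFieldType) (F2 : 2%N \in [pchar F]).

Lemma sqrf_surj (x : F) : exists s, s ^+ 2 = x.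
Proof. by have /codomP[s ->] := injF_onto (sqrf_inj F2) x; exists s. Qed.

Lemma card_artin_schreier_imset :
  #|F| = (2 * #|[set artin_schreier z | z : F]|)%N.
Proof.
rewrite -[in LHS]sum1_card (partition_big_imset (@artin_schreier F)) /=.
rewrite mulnC -sum_nat_const; apply: eq_bigr => _ /imsetP[w _ ->].
rewrite sum1dep_card.
have -> : [set z | artin_schreier z == artin_schreier w] = [set w; w + 1].
  by apply/setP => z; rewrite !inE artin_schreier_eq.
by rewrite cards2 eq_pchar2 // addrA addrr_pchar2 // add0r oner_neq0.
Qed.

Lemma quartic_root_artin_schreierP (k : F) :
  (exists2 g : F, g != 0 & g ^+ 2 * (1 + g ^+ 2 * k) = 1) <->
  (exists t, artin_schreier t = k).
Proof.
split=> [[g g_neq0 E] | [t]]; last rewrite artin_schreierE //.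
  exists (g ^- 2); rewrite artin_schreierE //.
  have -> : k = (g ^+ 2 * (1 + g ^+ 2 * k) - g ^+ 2) / g ^+ 4 by field.
  by rewrite E; field.
have [-> | t_neq0] := eqVneq t 0.
  rewrite expr0n subr0 => <-; exists 1; first exact: oner_neq0.
  by rewrite !mulr0 addr0 !mulr1 expr1n.
have [s s2t] := sqrf_surj t.
have s_neq0 : s != 0 by apply: contraNneq t_neq0 => s0; rewrite -s2t s0 expr0n.
by move=> <-; exists s^-1; rewrite ?invr_eq0 // -s2t; field.
Qed.

End FiniteChar2Field.

Lemma size_sum_Xexp2 (R : nzRingType) n :
  size (\sum_(i < n.+1) 'X^(2 ^ i) : {poly R}) = (2 ^ n).+1.
Proof.
elim: n => [|n IHn]; first by rewrite big_ord1 size_polyXn.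
by rewrite big_ord_recr /= addrC size_polyDl size_polyXn // IHn ltnS ltn_exp2l.
Qed.

Section AbsoluteTrace.
Variables (h : nat) (F : finFieldType).
Hypothesis hF : #|F| = (2 ^ h)%N.

Lemma finField_pchar2 : 2%N \in [pchar F].
Proof. exact: card_finPcharP hF _. Qed.

Lemma finField_log_gt0 : (0 < h)%N.
Proof. by have := finNzRing_gt1 F; rewrite hF; case: (h). Qed.

Lemma trace2D (x y : F) : trace2 h (x + y) = trace2 h x + trace2 h y.
Proof.
rewrite /trace2 -big_split; apply: eq_bigr => i _.
by rewrite exprDn_pchar // pnatX pnatE ?finField_pchar2.
Qed.

Lemma trace2_sqr (x : F) : trace2 h (x ^+ 2) = trace2 h x.
Proof.
rewrite /trace2; case: h hF finField_log_gt0 => // n hn _.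
rewrite big_ord_recr big_ord_recl /= -exprM -expnS -hn expf_card addrC.
by congr (_ + _); apply: eq_bigr => i _; rewrite -exprM -expnS.
Qed.

Lemma trace2_artin_schreier (z : F) : trace2 h (artin_schreier z) = 0.
Proof. by rewrite trace2D trace2_sqr addrr_pchar2 // finField_pchar2. Qed.

Lemma card_trace2_ker : (#|[set y : F | trace2 h y == 0%R]| <= 2 ^ h.-1)%N.
Proof.
pose T : {poly F} := \sum_(i < h) 'X^(2 ^ i).
have sizeT : size T = (2 ^ h.-1).+1.
  by rewrite /T -(size_sum_Xexp2 F) prednK ?finField_log_gt0.
have T_neq0 : T != 0 by rewrite -size_poly_eq0 sizeT.
rewrite cardE -ltnS -sizeT; apply: max_poly_roots T_neq0 _ (enum_uniq _).
apply/allP => y; rewrite mem_enum inE /root /T horner_sum.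
by under eq_bigr do rewrite hornerXn.
Qed.

Lemma trace2_eq0P (e : F) : trace2 h e = 0 <-> exists z, artin_schreier z = e.
Proof.
split=> [e_ker | [z <-]]; last exact: trace2_artin_schreier.
set AS := [set artin_schreier z | z : F]; set ker := [set y : F | trace2 h y == 0].
have AS_ker : AS \subset ker.
  by apply/subsetP => _ /imsetP[z _ ->]; rewrite inE trace2_artin_schreier.
have card_ker : #|ker| = #|AS|.
  apply/eqP; rewrite eqn_leq [(#|AS| <= _)%N]subset_leq_card // andbT.
  apply: leq_trans card_trace2_ker _.
  rewrite -(leq_pmul2l (isT : (0 < 2)%N)) -expnS prednK ?finField_log_gt0 //.
  by rewrite -hF -card_artin_schreier_imset ?finField_pchar2.
have : e \in ker by rewrite inE e_ker.
by rewrite -(subset_cardP (esym card_ker) AS_ker) => /imsetP[z _ ->]; exists z.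
Qed.

End AbsoluteTrace.

Section HyperbolicForm.
Variables (K : fieldType) (m : nat).
Local Notation V := 'rV[K]_(m + m).

Lemma mx11_trmx (A : 'M[K]_1) : A 0 0 = A^T 0 0.
Proof. by rewrite mxE. Qed.

Lemma mx11D (A B : 'M[K]_1) : (A + B) 0 0 = A 0 0 + B 0 0.
Proof. by rewrite mxE. Qed.

Lemma trmx_Fmx : (Fmx K m)^T = Fmx K m.
Proof. by rewrite /Fmx tr_block_mx !trmx0 trmx1. Qed.

Lemma bformDl (u v w : V) : bform (u + v) w = bform u w + bform v w.
Proof. by rewrite /bform !mulmxDl mxE. Qed.

Lemma bformDr (u v w : V) : bform u (v + w) = bform u v + bform u w.
Proof. by rewrite /bform linearD /= mulmxDr mxE. Qed.

Lemma bformZl k (u w : V) : bform (k *: u) w = k * bform u w.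
Proof. by rewrite /bform -!scalemxAl mxE. Qed.

Lemma bformZr k (u w : V) : bform u (k *: w) = k * bform u w.
Proof. by rewrite /bform linearZ /= -scalemxAr mxE. Qed.

Lemma bformC (u v : V) : bform u v = bform v u.
Proof. by rewrite /bform [LHS]mx11_trmx !trmx_mul trmxK trmx_Fmx mulmxA. Qed.

Lemma bform_nondeg (d : V) : (forall u, bform d u = 0) -> d = 0.
Proof.
move=> d_perp; have dF : d *m Fmx K m = 0.
  apply/rowP => j; rewrite [RHS]mxE -(d_perp (delta_mx 0 j)) /bform.
  by rewrite trmx_delta -colE [RHS]mxE.
have FF : Fmx K m *m Fmx K m = 1%:M.
  rewrite /Fmx mulmx_block !mulmx0 !mul0mx !mulmx1 !addr0 !add0r.
  by rewrite [RHS]scalar_mx_block.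
by rewrite -[d]mulmx1 -FF mulmxA dF mul0mx.
Qed.

Lemma theta0D (u v : V) : theta0 (u + v) = theta0 u + theta0 v + bform u v.
Proof.
have EF : Emx K m + (Emx K m)^T = Fmx K m.
  by rewrite /Emx /Fmx tr_block_mx !trmx0 trmx1 add_block_mx !addr0 !add0r.
have Evu : (v *m Emx K m *m u^T) 0 0 = (u *m (Emx K m)^T *m v^T) 0 0.
  by rewrite [LHS]mx11_trmx !trmx_mul trmxK mulmxA.
rewrite /theta0 /bform -EF linearD /= !(mulmxDl, mulmxDr) !mx11D Evu.
by ring.
Qed.

Lemma theta0Z k (u : V) : theta0 (k *: u) = k ^+ 2 * theta0 u.
Proof. by rewrite /theta0 linearZ /= -scalemxAr -!scalemxAl !mxE mulrA expr2. Qed.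

Lemma thetaZ a k (u : V) : theta a (k *: u) = k ^+ 2 * theta a u.
Proof. by rewrite /theta theta0Z bformZr exprMn mulrDr. Qed.

Lemma transvE (c u : V) : u *m transv c = u + bform u c *: c.
Proof.
rewrite /transv mulmxDr mulmx1 !mulmxA.
by rewrite [u *m _ *m _]mx11_scalar mul_scalar_mx.
Qed.

End HyperbolicForm.

Section Char2Forms.
Variables (K : fieldType) (m : nat) (K2 : 2%N \in [pchar K]).
Local Notation V := 'rV[K]_(m + m).

Lemma addv_eq0_pchar2 (a b : V) : (a + b == 0) = (a == b).
Proof. by rewrite addr_eq0 -scaleN1r oppr_pchar2 // scale1r. Qed.

Lemma bform_alt (u : V) : bform u u = 0.
Proof.
have u2 : u + u = 0 by rewrite -{1 2}[u]scale1r -scalerDl addrr_pchar2 // scale0r.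
have := theta0D u u; rewrite u2 -(scale0r 0) theta0Z expr0n mul0r.
by rewrite addrr_pchar2 // add0r => <-.
Qed.

Lemma transv_invol (c u : V) : u *m transv c *m transv c = u.
Proof.
rewrite !transvE bformDl bformZl bform_alt mulr0 addr0 -addrA -scalerDl.
by rewrite addrr_pchar2 // scale0r addr0.
Qed.

Lemma transvK (c : V) : transv c *m transv c = 1%:M.
Proof. by apply/row_matrixP => i; rewrite !rowE mulmxA transv_invol mulmx1. Qed.

Lemma invmx_transv (c : V) : invmx (transv c) = transv c.
Proof.
have [T_unit _] := mulmx1_unit (transvK c).
by rewrite -[LHS]mulmx1 -(transvK c) mulmxA mulVmx ?mul1mx.
Qed.

Lemma theta_transv (a c u : V) :
  qf_act (theta a) (transv c) u = theta a u + bform c u ^+ 2 * (1 + theta a c).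
Proof.
rewrite /qf_act invmx_transv transvE /theta theta0D theta0Z bformDr !bformZr.
by rewrite [bform u c]bformC sqrrD_pchar2 // exprMn; ring.
Qed.

Lemma theta_transv_eqP (a b c : V) :
  (forall u, qf_act (theta a) (transv c) u = theta b u) <->
  (forall u, bform (a + b) u ^+ 2 = bform c u ^+ 2 * (1 + theta a c)).
Proof.
have eq_u u : (qf_act (theta a) (transv c) u == theta b u) =
              (bform (a + b) u ^+ 2 == bform c u ^+ 2 * (1 + theta a c)).
  rewrite theta_transv /theta bformDl sqrrD_pchar2 // -addrA (inj_eq (addrI _)).
  by rewrite eq_pchar2 // [RHS]eq_pchar2 // addrAC.
by split=> E u; apply/eqP; [rewrite -eq_u | rewrite eq_u]; apply/eqP.
Qed.

Lemma theta_transv_scaled_eqP (a b : V) g : a != b ->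
  (forall u, qf_act (theta a) (transv (g *: (a + b))) u = theta b u) <->
  g ^+ 2 * (1 + g ^+ 2 * theta a (a + b)) = 1.
Proof.
rewrite -addv_eq0_pchar2 => ab_neq0; rewrite theta_transv_eqP thetaZ.
set L := g ^+ 2 * (1 + _).
have eq_u u : bform (g *: (a + b)) u ^+ 2 * (1 + g ^+ 2 * theta a (a + b)) =
              bform (a + b) u ^+ 2 * L.
  by rewrite bformZl exprMn /L; ring.
split=> [E | L1 u]; last by rewrite eq_u L1 mulr1.
apply/eqP; apply: contraNT ab_neq0 => L_neq1; apply/eqP/bform_nondeg => u.
have : bform (a + b) u ^+ 2 * (L - 1) == 0 by rewrite mulrBr mulr1 -eq_u -E subrr.
by rewrite mulf_eq0 subr_eq0 (negPf L_neq1) orbF expf_eq0 => /eqP.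
Qed.

Lemma theta_addr (a b : V) :
  theta a (a + b) = theta0 a + theta0 b + artin_schreier (bform a b).
Proof.
by rewrite /theta theta0D bformDr bform_alt add0r /artin_schreier; ring.
Qed.

End Char2Forms.

Section FiniteChar2Forms.
Variables (F : finFieldType) (F2 : 2%N \in [pchar F]) (m : nat).
Local Notation V := 'rV[F]_(m + m).

Lemma theta_transv_center (a b c : V) : a != b ->
  (forall u, qf_act (theta a) (transv c) u = theta b u) ->
  exists2 g, g != 0 & c = g *: (a + b).
Proof.
rewrite -addv_eq0_pchar2 // => ab_neq0 /(theta_transv_eqP F2) E.
have [s s2] := sqrf_surj F2 (1 + theta a c).
have ab_sc : a + b = s *: c.
  apply/eqP; rewrite -addv_eq0_pchar2 //; apply/eqP/bform_nondeg => u.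
  apply/eqP; rewrite bformDl bformZl -eq_pchar2 //; apply/eqP/(sqrf_inj F2).
  by rewrite E exprMn s2 mulrC.
have s_neq0 : s != 0 by apply: contraNneq ab_neq0 => s0; rewrite ab_sc s0 scale0r.
by exists s^-1; rewrite ?invr_eq0 // ab_sc scalerA mulVf ?scale1r.
Qed.

Lemma theta_transv_scaled_artin_schreierP (a b : V) : a != b ->
  (exists2 g : F, g != 0 &
     forall u, qf_act (theta a) (transv (g *: (a + b))) u = theta b u) <->
  (exists z, artin_schreier z = theta0 a + theta0 b).
Proof.
move=> ab_neq.
rewrite -(artin_schreier_shift F2 _ (bform a b)) -theta_addr //.
rewrite -quartic_root_artin_schreierP //.
by split=> -[g g_neq0 E]; exists g => //; apply/(theta_transv_scaled_eqP F2).
Qed.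

End FiniteChar2Forms.

Theorem lemmaA6 (h : nat) (K : finFieldType) (hK : #|K| = (2 ^ h)%N)
  (m : nat) (hm : (0 < m)%N) (a b : 'rV[K]_(m + m)) (hab : a != b) :
  let P1 := exists c : 'rV[K]_(m + m),
              forall u, qf_act (theta a) (transv c) u = theta b u in
  let P2 := exists2 g : K, g != 0 &
              forall u, qf_act (theta a) (transv (g *: (a + b))) u = theta b u in
  let P3 := trace2 h (theta0 a) = trace2 h (theta0 b) in
  let P4 := ~ irreducible_poly ('X^2 + 'X + (theta0 a + theta0 b)%:P) in
  [/\ (P1 <-> P2), (P2 <-> P3) & (P3 <-> P4)].
Proof.
(* [hm] is redundant: for m = 0 the space is trivial and [a != b] fails. *)
move=> P1 P2 P3 P4; have K2 := finField_pchar2 hK.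
pose Q := exists z, artin_schreier z = theta0 a + theta0 b.
have P2Q : P2 <-> Q by apply: theta_transv_scaled_artin_schreierP.
have P3Q : P3 <-> Q.
  rewrite /P3 /Q -(trace2_eq0P hK) (trace2D hK).
  by split=> [-> | /eqP]; [exact: addrr_pchar2 | rewrite -eq_pchar2 // => /eqP].
have P4Q : P4 <-> Q.
  rewrite /P4 cubic_reducibleP ?size_artin_schreier_poly //.
  by split=> -[z /(root_artin_schreier_polyP K2)]; exists z.
split; last exact: iff_trans P3Q (iff_sym P4Q).
- split=> [[c E] | [g _ E]]; last by exists (g *: (a + b)).
  have [g g_neq0 c_def] := theta_transv_center K2 hab E.
  by exists g; rewrite // -c_def.
- exact: iff_trans P2Q (iff_sym P3Q).
Qed.
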